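(* Let $N\ge1$, $n=\sum_{\nu=1}^N n_\nu$, $m\ge1$. For $\nu=1,\dots,N$ let $Q_\nu\in\mathbb{R}^{n_\nu\times n_\nu}$ be symmetric positive definite, $c_\nu\in\mathbb{R}^{n_\nu}$, and $X_\nu\subseteq\mathbb{R}^{n_\nu}$ nonempty such that $X=X_1\times\dots\times X_N$ is convex and closed. Let $a\in\mathbb{R}^m$, $a\ge0$, $Q_y\in\mathbb{R}^{m\times m}$ positive definite diagonal, $B,L\in\mathbb{R}^{n\times m}$. Let $\varepsilon>0$ and let $\tilde\phi_\varepsilon:\mathbb{R}\to\mathbb{R}$ be convex and smooth (applied componentwise to vectors). Consider the Nash equilibrium problem NEP($\varepsilon$) in which player $\nu$ solves $$\min_{x_\nu\in X_\nu}\ \theta^\varepsilon_\nu(x_\nu,x_{-\nu})=\tfrac12 x_\nu^\top Q_\nu x_\nu+c_\nu^\top x_\nu+\tfrac12\sum_{i=1}^m a_i\Big[(L^\top+Q_y^{-1}B^\top)x+\tilde\phi_\varepsilon\big((L^\top-Q_y^{-1}B^\top)x\big)\Big]_i.$$ Then NEP($\varepsilon$) has a unique Nash equilibrium, i.e. a unique $x^*\in X$ with $\theta^\varepsilon_\nu(x^*_\nu,x^*_{-\nu})\le\theta^\varepsilon_\nu(x_\nu,x^*_{-\nu})$ for all $x_\nu\in X_\nu$ and all $\nu$.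
   Context: Notation: $x=(x_1,\dots,x_N)$ with $x_\nu\in\mathbb{R}^{n_\nu}$, $x_{-\nu}$ = all components other than $x_\nu$. NEP($\varepsilon$) arises from a multi-leader-follower game by replacing the follower's best response $\max\{Q_y^{-1}B^\top x,L^\top x\}$ with its smoothing $\tfrac12[(L^\top+Q_y^{-1}B^\top)x+\tilde\phi_\varepsilon((L^\top-Q_y^{-1}B^\top)x)]$, obtained from a smooth NCP function $\phi_\varepsilon(\alpha,\beta)=\alpha+\beta-\tilde\phi_\varepsilon(\alpha-\beta)$. *)

From HB Require Import structures.
From mathcomp Require Import all_boot all_order all_algebra.
From mathcomp Require Import all_classical all_reals all_analysis.
Set Implicit Arguments. Unset Strict Implicit. Unset Printing Implicit Defensive.
Import Order.TTheory GRing.Theory Num.Theory.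
Import numFieldTopology.Exports.
Local Open Scope ring_scope.
Local Open Scope classical_set_scope.

Section Defs.
Variable R : realType.

Definition sym_mx (k : nat) (Q : 'M[R]_k) : Prop := Q^T = Q.
Definition posdef_mx (k : nat) (Q : 'M[R]_k) : Prop :=
  forall v : 'cV[R]_k, v != 0 -> 0 < (v^T *m Q *m v) 0 0.

Definition convex_set_mx (k : nat) (S : set 'cV[R]_k) : Prop :=
  forall u v, S u -> S v -> forall t : R, 0 <= t <= 1 ->
    S (t *: u + (1 - t) *: v).

Definition convex_fun (f : R -> R) : Prop :=
  forall x y t : R, 0 <= t <= 1 -> f (t * x + (1 - t) * y) <= t * f x + (1 - t) * f y.

Definition smooth_fun (f : R -> R) : Prop :=
  forall (k : nat) (x : R), derivable (derive1n k f) x 1.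

Definition stack (N : nat) (nn : 'I_N -> nat) (xs : forall nu, 'cV[R]_(nn nu))
  : 'cV[R]_(\sum_(nu < N) nn nu) := \mxcol_(nu < N) xs nu.

Definition prod_set (N : nat) (nn : 'I_N -> nat) (X : forall nu, set 'cV[R]_(nn nu))
  : set 'cV[R]_(\sum_(nu < N) nn nu) :=
  [set v | exists xs : forall nu, 'cV[R]_(nn nu), (forall nu, X nu (xs nu)) /\ v = stack xs].

Definition theta (N m : nat) (nn : 'I_N -> nat)
  (Q : forall nu, 'M[R]_(nn nu)) (c : forall nu, 'cV[R]_(nn nu))
  (a : 'cV[R]_m) (Qy : 'M[R]_m) (B L : 'M[R]_(\sum_(nu < N) nn nu, m))
  (phi : R -> R) (nu : 'I_N) (xs : forall j, 'cV[R]_(nn j)) : R :=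
  let x := stack xs in
  let w := (L^T + invmx Qy *m B^T) *m x + map_mx phi ((L^T - invmx Qy *m B^T) *m x) in
  2^-1 * ((xs nu)^T *m Q nu *m xs nu) 0 0 + ((c nu)^T *m xs nu) 0 0
  + 2^-1 * \sum_(i < m) a i 0 * w i 0.

Definition nash_eq (N m : nat) (nn : 'I_N -> nat)
  (Q : forall nu, 'M[R]_(nn nu)) (c : forall nu, 'cV[R]_(nn nu))
  (X : forall nu, set 'cV[R]_(nn nu))
  (a : 'cV[R]_m) (Qy : 'M[R]_m) (B L : 'M[R]_(\sum_(nu < N) nn nu, m))
  (phi : R -> R) (xs : forall j, 'cV[R]_(nn j)) : Prop :=
  (forall nu, X nu (xs nu)) /\
  forall (nu : 'I_N) (y : 'cV[R]_(nn nu)), X nu y ->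
    theta Q c a Qy B L phi nu xs <= theta Q c a Qy B L phi nu (@dfwith _ (fun j => 'cV[R]_(nn j)) xs nu y).

End Defs.

From HB Require Import structures.
From mathcomp Require Import all_boot all_order all_algebra.
From mathcomp Require Import all_classical all_reals all_analysis.
From mathcomp Require Import ring lra.
Import Order.TTheory GRing.Theory Num.Theory.
Import numFieldTopology.Exports.
Unset Printing Implicit Defensive.
Local Open Scope ring_scope.
Local Open Scope classical_set_scope.

(* NEP(eps) is a potential game.  With x the stacked profile, D = diag(Q_1, ..., Q_N),
   L+ = L^T + Qy^-1 B^T and L- = L^T - Qy^-1 B^T, the function
     P(x) = 1/2 x^T D x + c^T x + 1/2 sum_i a_i [(L+ x)_i + phi((L- x)_i)]
   differs from each theta_nu by a term independent of x_nu, so every minimizer of P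
   on X is an equilibrium.  As D is positive definite, a >= 0 and phi is convex, P is
   strongly convex: P(x) >= P(y) + P'(y)(x - y) + 1/2 (x - y)^T D (x - y).  Hence P is
   coercive and attains its minimum on the closed set X.  Conversely, at an equilibrium
   e each player may move along a segment inside the convex set X_nu, and the one-sided
   derivatives of P along these moves add up to the variational inequality
   P'(e)(y - e) >= 0 for y in X.  Adding it, for two equilibria x and y, to the two
   strong-convexity inequalities gives (x - y)^T D (x - y) <= 0, so x = y. *)

Section ConvexDerivative.
Context {R : realType}.

Lemma cvg_right_diff_quotient {f : R -> R} {u : R} (d : R) : derivable f u 1 ->
  (f (u + t * d) - f u) / t @[t --> 0^'+] --> derive1 f u * d.
Proof.
move=> /derivable1_diffP df.
have : h^-1 *: ((f \o shift u) (h *: d) - f u) @[h --> 0^'] --> 'D_d f u.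
  exact: diff_derivable.
rewrite (deriveE _ df) (diff1E df) => /cvg_dnbhs_at_right.
rewrite [X in _ --> X]mulrC; apply: cvg_trans; apply: near_eq_cvg; near=> t.
by rewrite /= (addrC (t *: d)) mulrC.
Unshelve. all: by end_near. Qed.

Lemma convex_fun_tangent {f : R -> R} {u : R} (v : R) :
  convex_fun f -> derivable f u 1 -> f u + derive1 f u * (v - u) <= f v.
Proof.
move=> f_convex df; rewrite -lerBrDl.
apply: (cvgr_to_le (cvg_right_diff_quotient (v - u) df)); near=> t.
have t0 : 0 < t by near: t; exact: nbhs_right_gt.
have t1 : t <= 1 by near: t; exact: nbhs_right_le.
have := f_convex v u t; rewrite (ltW t0) t1 => /(_ isT).
have -> : t * v + (1 - t) * u = u + t * (v - u) by ring.
by move=> chord; rewrite ler_pdivrMr //; lra.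
Unshelve. all: by end_near. Qed.

End ConvexDerivative.

Section FiniteDimensional.
Context {R : realType}.

Lemma mxentryD {p q} (A B : 'M[R]_(p, q)) i j : (A + B) i j = A i j + B i j.
Proof. by rewrite mxE. Qed.

Lemma mxentryZ {p q} t (A : 'M[R]_(p, q)) i j : (t *: A) i j = t * A i j.
Proof. by rewrite mxE. Qed.

Lemma quadformZ {k} (A : 'M[R]_k) (s : R) (x : 'cV[R]_k) :
  ((s *: x)^T *m A *m (s *: x)) 0 0 = s ^+ 2 * (x^T *m A *m x) 0 0.
Proof. by rewrite !linearZ /= -!scalemxAl scalerA mxE expr2. Qed.

Lemma posdef_quadform_ge0 {k} (A : 'M[R]_k) (x : 'cV[R]_k) :
  posdef_mx A -> 0 <= (x^T *m A *m x) 0 0.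
Proof.
by move=> A_pd; have [->|x0] := eqVneq x 0; [rewrite mulmx0 mxE | exact/ltW/A_pd].
Qed.

Lemma mx_entry_le_norm {p q} (x : 'M[R]_(p, q)) i j : `|x i j| <= `|x|.
Proof.
have /mapP[ij _ ->] : `|x i j| \in [seq `|x ij.1 ij.2| | ij : 'I_p * 'I_q].
  by apply/mapP; exists (i, j) => //=; rewrite mem_enum.
by rewrite [leRHS]/Num.norm /= mx_normrE; apply/bigmax_geP; right; exists ij.
Qed.

Lemma norm_rowmx_mul_le {k} (r : 'rV[R]_k) (x : 'cV[R]_k) :
  `|(r *m x) 0 0| <= (\sum_j `|r 0 j|) * `|x|.
Proof.
rewrite mxE mulr_suml; apply: le_trans (ler_norm_sum _ _ _) _.
by apply: ler_sum => j _; rewrite normrM ler_wpM2l // mx_entry_le_norm.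
Qed.

Lemma continuous_addf {T : topologicalType} {f g : T -> R} :
  continuous f -> continuous g -> continuous (fun x => f x + g x).
Proof. by move=> f_cont g_cont x; exact: continuousD (f_cont x) (g_cont x). Qed.

Lemma trmx_continuous {p q} : continuous (@trmx R p q).
Proof.
move=> x A /= /nbhs_ballP[e e0 eA]; apply/nbhs_ballP; exists e => //= y [_ xy].
by apply: eA; split => // i j; rewrite !mxE; exact: xy.
Qed.

Lemma continuous_mulmx_entry {p q r} (A : 'M[R]_(p, q)) i j :
  continuous (fun x : 'M[R]_(q, r) => (A *m x) i j).
Proof.
have -> : (fun x : 'M[R]_(q, r) => (A *m x) i j) = fun x => \sum_k A i k * x k j.
  by apply: funext => x; rewrite mxE.
apply: (continuous_big add_continuous) => k _ x.
by apply: continuousM; [exact: cst_continuous | exact: coord_continuous].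
Qed.

Lemma continuous_quadform {k} (A : 'M[R]_k) :
  continuous (fun x : 'cV[R]_k => (x^T *m A *m x) 0 0).
Proof.
have -> : (fun x : 'cV[R]_k => (x^T *m A *m x) 0 0) =
    fun x => \sum_j x j 0 * (A *m x) j 0.
  by apply: funext => x; rewrite -mulmxA mxE; apply: eq_bigr => j _; rewrite mxE.
apply: (continuous_big add_continuous) => j _ x.
by apply: continuousM; [exact: coord_continuous | exact: continuous_mulmx_entry].
Qed.

Lemma closed_norm_preimage {k} (S : set R) :
  closed S -> closed [set x : 'cV[R]_k | S `|x|].
Proof.
by apply: (@closed_comp _ _ (@Num.norm _ 'cV[R]_k)) => x _; exact: norm_continuous.
Qed.

Lemma bounded_closed_compact_cV {k} (A : set 'cV[R]_k) r :
  closed A -> A `<=` [set x | `|x| <= r] -> compact A.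
Proof.
move=> A_closed A_bounded.
pose box := [set v : 'rV[R]_k | forall i, `[- r, r]%classic (v ord0 i)].
have box_compact : compact box.
  by apply: (@rV_compact _ _ (fun=> `[- r, r]%classic)) => _; exact: segment_compact.
apply: (subclosed_compact A_closed (continuous_compact _ box_compact)).
  exact/continuous_subspaceT/trmx_continuous.
move=> x /A_bounded xr; exists x^T; last exact: trmxK.
move=> i; rewrite /= in_itv /= mxE -ler_norml.
exact: le_trans (mx_entry_le_norm _ _ _) xr.
Qed.

Lemma posdef_quadform_lbound {k} {A : 'M[R]_k} : posdef_mx A ->
  exists2 mu, 0 < mu & forall x : 'cV[R]_k, mu * `|x| ^+ 2 <= (x^T *m A *m x) 0 0.
Proof.
move=> A_pd; pose q (x : 'cV[R]_k) := (x^T *m A *m x) 0 0.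
have q0 mu : mu * `|0 : 'cV[R]_k| ^+ 2 <= q 0 by rewrite /q mulmx0 mxE normr0 expr0n mulr0.
have unit_dir (x : 'cV[R]_k) : x != 0 -> `| `|x|^-1 *: x | = 1.
  by move=> x0; apply: normrZV; rewrite unitfE normr_eq0.
have [[u0 u01]|no_unit] := pselect (exists u : 'cV[R]_k, `|u| = 1); last first.
  exists 1 => // x; have [->//|x0] := eqVneq x 0.
  by case: no_unit; exists (`|x|^-1 *: x); exact: unit_dir.
have sphere_compact : compact [set u : 'cV[R]_k | `|u| = 1].
  apply: (bounded_closed_compact_cV _ 1) => [|u /= ->//].
  by apply: (closed_norm_preimage [set y | y = 1]); exact: closed_eq.
have [u u1 q_min] := compact_EVT_min (ex_intro _ u0 u01) sphere_compact
  (continuous_subspaceT (continuous_quadform A)).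
rewrite inE /= in u1.
have u0' : u != 0 by apply: contra_eq_neq u1 => ->; rewrite normr0 eq_sym oner_neq0.
exists (q u); first exact: A_pd.
move=> x; have [->//|x0] := eqVneq x 0.
have -> : x = `|x| *: (`|x|^-1 *: x) by rewrite scalerA mulfV ?normr_eq0 // scale1r.
rewrite quadformZ normrZ normr_id unit_dir // mulr1 mulrC.
by rewrite ler_wpM2l ?sqr_ge0 //; apply: q_min; rewrite inE /= unit_dir.
Qed.

Lemma coercive_min {k} {f : 'cV[R]_k -> R} {A : set 'cV[R]_k} {alpha beta gamma : R} :
  closed A -> A !=set0 -> continuous f -> 0 < alpha ->
  (forall x, alpha * `|x| ^+ 2 - beta * `|x| + gamma <= f x) ->
  exists2 x, A x & forall y, A y -> f x <= f y.
Proof.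
move=> A_closed [x0 Ax0] f_cont alpha0 f_ge.
pose K := `|beta| + `|gamma| + `|f x0|.
have K0 : 0 <= K by rewrite !addr_ge0.
pose r := K / alpha + 1.
have far y : r < `|y| -> f x0 < f y.
  move=> ry; set s := `|y| in ry.
  have s1 : 1 <= s by apply: le_trans _ (ltW ry); rewrite lerDr divr_ge0 // ltW.
  have sK : s * K < s * (alpha * s).
    rewrite ltr_pM2l ?(lt_le_trans ltr01 s1) // -ltr_pdivrMl // mulrC.
    by apply: le_lt_trans ry; rewrite lerDl.
  have := f_ge y; have := sK; have := ler_wpM2r (le_trans ler01 s1) (ler_norm beta).
  have := normr_ge0 gamma; have := normr_ge0 (f x0).
  have := ler_norm (- gamma); have := ler_norm (f x0); rewrite normrN /K -/s; nra.
pose Ar := A `&` [set y | `|y| <= r].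
have Ar_x0 : Ar x0 by split => //=; rewrite leNgt; apply/negP => /far; rewrite ltxx.
have Ar_compact : compact Ar.
  apply: (bounded_closed_compact_cV _ r) => [|y []//].
  apply: (closedI A_closed); apply: (closed_norm_preimage [set y | y <= r]).
  exact: closed_le.
have [x Ar_x x_min] := compact_EVT_min (ex_intro _ x0 Ar_x0) Ar_compact
  (continuous_subspaceT f_cont).
rewrite inE in Ar_x; case: Ar_x => Ax _.
exists x => // y Ay; have [yr|ry] := leP `|y| r; first by apply: x_min; rewrite inE.
by apply: le_trans (x_min x0 _) (ltW (far _ ry)); rewrite inE.
Qed.

End FiniteDimensional.

Section BlockMatrices.
Context {R : realType} {N : nat} {p_ : 'I_N -> nat}.

Lemma mxcolZ {m} t (A_ : forall i, 'M[R]_(p_ i, m)) :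
  t *: \mxcol_i A_ i = \mxcol_i (t *: A_ i).
Proof. by apply/matrixP => i j; rewrite !mxE. Qed.

Lemma mxcol_trmx_mul (xs ys : forall i, 'cV[R]_(p_ i)) :
  ((\mxcol_i xs i)^T *m \mxcol_i ys i) 0 0 = \sum_i ((xs i)^T *m ys i) 0 0.
Proof. by rewrite tr_mxcol mul_mxrow_mxcol summxE. Qed.

Lemma mxcol_mxdiag_quadform (Q_ : forall i, 'M[R]_(p_ i))
    (xs ys : forall i, 'cV[R]_(p_ i)) :
  ((\mxcol_i xs i)^T *m \mxdiag_i Q_ i *m \mxcol_i ys i) 0 0 =
  \sum_i ((xs i)^T *m Q_ i *m ys i) 0 0.
Proof. by rewrite tr_mxcol mul_mxrow_mxdiag mul_mxrow_mxcol summxE. Qed.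

Lemma posdef_mxdiag {Q_ : forall i, 'M[R]_(p_ i)} :
  (forall i, posdef_mx (Q_ i)) -> posdef_mx (\mxdiag_i Q_ i).
Proof.
move=> Q_pd x x0; rewrite -[x]submxcolK mxcol_mxdiag_quadform.
have [i xi0] : exists i, submxcol x i != 0.
  apply: contrapT => no_block; move/eqP: x0; apply.
  rewrite -[LHS]submxcolK -mxcol0; apply: eq_mxcol => i.
  by apply/eqP/negPn/negP => xi0; apply: no_block; exists i.
rewrite (bigD1 i) //= (lt_le_trans (Q_pd i _ xi0)) // lerDl sumr_ge0 // => j _.
exact: posdef_quadform_ge0.
Qed.

End BlockMatrices.

Section PotentialGame.
Context {R : realType} {N m : nat} {nn : 'I_N -> nat}
  {Q : forall nu, 'M[R]_(nn nu)} {c : forall nu, 'cV[R]_(nn nu)}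
  {X : forall nu, set 'cV[R]_(nn nu)}
  {a : 'cV[R]_m} {Qy : 'M[R]_m} {B L : 'M[R]_(\sum_(nu < N) nn nu, m)}
  {phi : R -> R}.
Hypotheses (Q_sym : forall nu, sym_mx (Q nu)) (Q_posdef : forall nu, posdef_mx (Q nu))
  (a_ge0 : forall i, 0 <= a i 0)
  (phi_convex : convex_fun phi) (phi_derivable : forall x, derivable phi x 1)
  (X_convex : convex_set_mx (prod_set X)).

Local Notation n := (\sum_(nu < N) nn nu)%N.
Local Notation profile := (forall nu, 'cV[R]_(nn nu)).
Local Notation update := (@dfwith _ (fun nu => 'cV[R]_(nn nu))).
Local Notation theta := (theta Q c a Qy B L phi).
Local Notation nash := (nash_eq Q c X a Qy B L phi).

Definition Lplus : 'M[R]_(m, n) := L^T + invmx Qy *m B^T.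
Definition Lminus : 'M[R]_(m, n) := L^T - invmx Qy *m B^T.
Definition Qblock : 'M[R]_n := \mxdiag_nu Q nu.

Definition own_cost {nu} (z : 'cV[R]_(nn nu)) : R :=
  2^-1 * (z^T *m Q nu *m z) 0 0 + ((c nu)^T *m z) 0 0.

Definition coupling (x : 'cV[R]_n) : R :=
  2^-1 * \sum_i a i 0 * ((Lplus *m x) i 0 + phi ((Lminus *m x) i 0)).

Definition potential (x : 'cV[R]_n) : R :=
  2^-1 * (x^T *m Qblock *m x) 0 0 + ((stack c)^T *m x) 0 0 + coupling x.

Definition potential_grad (x : 'cV[R]_n) : 'rV[R]_n :=
  x^T *m Qblock + (stack c)^T +
  2^-1 *: (a^T *m Lplus + (\row_i (a i 0 * derive1 phi ((Lminus *m x) i 0))) *m Lminus).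

Lemma thetaE nu (xs : profile) : theta nu xs = own_cost (xs nu) + coupling (stack xs).
Proof.
rewrite /theta /own_cost /coupling /Lplus /Lminus; congr (_ + _ * _).
by apply: eq_bigr => i _; rewrite [in LHS]mxE [X in _ + X]mxE.
Qed.

Lemma potential_stackE (xs : profile) :
  potential (stack xs) = \sum_nu own_cost (xs nu) + coupling (stack xs).
Proof.
rewrite /potential /Qblock /stack mxcol_mxdiag_quadform mxcol_trmx_mul.
by rewrite big_split /= mulr_sumr.
Qed.

Lemma theta_update_diff nu (xs : profile) y :
  theta nu (update xs nu y) - theta nu xs =
  potential (stack (update xs nu y)) - potential (stack xs).
Proof.
rewrite !thetaE !potential_stackE (bigD1 nu) //= [\sum_j own_cost (xs j)](bigD1 nu) //=.
rewrite (dfwithin xs y); under eq_bigr => j nej do rewrite dfwithout 1?eq_sym //.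
by ring.
Qed.

Lemma prod_set_update {xs : profile} {nu} {y : 'cV[R]_(nn nu)} :
  (forall j, X j (xs j)) -> X nu y -> prod_set X (stack (update xs nu y)).
Proof.
move=> Xxs Xy; exists (update xs nu y); split => // j.
by case: (eqVneq nu j) => [<-|nej]; rewrite ?dfwithin ?dfwithout.
Qed.

Lemma convex_factor {xs : profile} {nu} {y1 y2 : 'cV[R]_(nn nu)} {t} :
  (forall j, X j (xs j)) -> X nu y1 -> X nu y2 -> 0 <= t <= 1 ->
  X nu (t *: y1 + (1 - t) *: y2).
Proof.
move=> Xxs Xy1 Xy2 t01.
have [ws [Xws]] := X_convex _ _ (prod_set_update Xxs Xy1) (prod_set_update Xxs Xy2) t t01.
rewrite /stack !mxcolZ -mxcolD => /(congr1 (fun M => submxcol M nu)).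
by rewrite !mxcolK !dfwithin => ->.
Qed.

Lemma stack_update_segment (xs : profile) nu (y : 'cV[R]_(nn nu)) t :
  stack xs + t *: (stack (update xs nu y) - stack xs) =
  stack (update xs nu (xs nu + t *: (y - xs nu))).
Proof.
rewrite /stack -mxcolB mxcolZ -mxcolD; apply: eq_mxcol => j.
case: (eqVneq nu j) => [<-|nej]; first by rewrite !dfwithin.
by rewrite !dfwithout // subrr scaler0 addr0.
Qed.

Lemma stack_sum_updates (xs ys : profile) :
  \sum_nu (stack (update xs nu (ys nu)) - stack xs) = stack ys - stack xs.
Proof.
apply/mxcolP => j; rewrite submxcol_sum submxcolB /stack !mxcolK.
under eq_bigr do rewrite submxcolB !mxcolK.
rewrite (bigD1 j) //= dfwithin big1 ?addr0 // => nu nuj.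
by rewrite dfwithout ?subrr // eq_sym.
Qed.

Lemma nash_of_potential_min {xs : profile} : (forall nu, X nu (xs nu)) ->
  (forall x, prod_set X x -> potential (stack xs) <= potential x) -> nash xs.
Proof.
move=> Xxs xs_min; split => // nu y Xy.
rewrite -subr_ge0 theta_update_diff subr_ge0.
exact/xs_min/prod_set_update.
Qed.

Lemma Qblock_formC (x y : 'cV[R]_n) :
  (x^T *m Qblock *m y) 0 0 = (y^T *m Qblock *m x) 0 0.
Proof.
have Qblock_sym : Qblock^T = Qblock.
  by rewrite /Qblock tr_mxdiag; apply: eq_mxdiag => nu; exact: Q_sym.
transitivity ((x^T *m Qblock *m y)^T 0 0); first by rewrite [RHS]mxE.
by rewrite !trmx_mul trmxK Qblock_sym mulmxA.
Qed.

Lemma potential_shift (y w : 'cV[R]_n) :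
  potential (y + w) - potential y =
  (y^T *m Qblock *m w) 0 0 + 2^-1 * (w^T *m Qblock *m w) 0 0 + ((stack c)^T *m w) 0 0 +
  2^-1 * \sum_i a i 0 * ((Lplus *m w) i 0 +
    (phi ((Lminus *m y) i 0 + (Lminus *m w) i 0) - phi ((Lminus *m y) i 0))).
Proof.
rewrite /potential /coupling.
have -> : \sum_i a i 0 * ((Lplus *m (y + w)) i 0 + phi ((Lminus *m (y + w)) i 0)) =
    \sum_i a i 0 * ((Lplus *m y) i 0 + phi ((Lminus *m y) i 0)) +
    \sum_i a i 0 * ((Lplus *m w) i 0 +
      (phi ((Lminus *m y) i 0 + (Lminus *m w) i 0) - phi ((Lminus *m y) i 0))).
  by rewrite -big_split; apply: eq_bigr => i _; rewrite /= !mulmxDr !mxentryD; ring.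
have -> : ((y + w)^T *m Qblock *m (y + w)) 0 0 =
    (y^T *m Qblock *m y) 0 0 + 2 * (y^T *m Qblock *m w) 0 0 + (w^T *m Qblock *m w) 0 0.
  by rewrite !linearD /= !mulmxDl !mxentryD (Qblock_formC w y); ring.
by rewrite mulmxDr mxentryD; field.
Qed.

Lemma potential_gradE (y w : 'cV[R]_n) :
  (potential_grad y *m w) 0 0 =
  (y^T *m Qblock *m w) 0 0 + ((stack c)^T *m w) 0 0 +
  2^-1 * \sum_i a i 0 * ((Lplus *m w) i 0 +
    derive1 phi ((Lminus *m y) i 0) * (Lminus *m w) i 0).
Proof.
rewrite /potential_grad 2!(mulmxDl _ _ w) -scalemxAl (mulmxDl _ _ w).
rewrite !mxentryD mxentryZ mxentryD; congr (_ + _ * _).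
rewrite -!mulmxA !mxE -big_split; apply: eq_bigr => i _.
by rewrite !mxE /=; ring.
Qed.

Lemma potential_strongly_convex (x y : 'cV[R]_n) :
  potential y + (potential_grad y *m (x - y)) 0 0 +
    2^-1 * ((x - y)^T *m Qblock *m (x - y)) 0 0 <= potential x.
Proof.
have := potential_shift y (x - y); rewrite subrKC potential_gradE.
set w := x - y => shift.
suff : \sum_i a i 0 * ((Lplus *m w) i 0 +
         derive1 phi ((Lminus *m y) i 0) * (Lminus *m w) i 0) <=
       \sum_i a i 0 * ((Lplus *m w) i 0 +
         (phi ((Lminus *m y) i 0 + (Lminus *m w) i 0) - phi ((Lminus *m y) i 0))).
  by lra.
apply: ler_sum => i _; rewrite ler_wpM2l // lerD2l lerBrDl addrC.
set u := (Lminus *m y) i 0; set d := (Lminus *m w) i 0.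
have := convex_fun_tangent (u + d) phi_convex (phi_derivable u).
by rewrite (addrC u d) addrK (addrC (phi u)).
Qed.

Lemma continuous_potential : continuous potential.
Proof.
have phi_cont : continuous phi.
  by move=> u; apply/differentiable_continuous/derivable1_diffP.
rewrite /potential /coupling; apply: continuous_addf; first apply: continuous_addf.
- move=> x; apply: (continuousM (s := fun=> 2^-1)); first exact: cst_continuous.
  exact: continuous_quadform.
- exact: continuous_mulmx_entry.
move=> x; apply: (continuousM (s := fun=> 2^-1)); first exact: cst_continuous.
apply: (continuous_big add_continuous) => i _ {}x.
apply: (continuousM (s := fun=> a i 0)
  (t := fun y : 'cV[R]_n => (Lplus *m y) i 0 + phi ((Lminus *m y) i 0))).
  exact: cst_continuous.
apply: continuous_addf; first exact: continuous_mulmx_entry.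
move=> y; apply: (continuous_comp (f := fun y : 'cV[R]_n => (Lminus *m y) i 0)).
  exact: continuous_mulmx_entry.
exact: phi_cont.
Qed.

Lemma exists_potential_min : closed (prod_set X) -> (forall nu, X nu !=set0) ->
  exists2 xs : profile, (forall nu, X nu (xs nu)) &
    forall x, prod_set X x -> potential (stack xs) <= potential x.
Proof.
move=> X_closed X_ne.
have X0 : prod_set X !=set0.
  pose xs0 : profile := fun nu => projT1 (cid (X_ne nu)).
  by exists (stack xs0), xs0; split => // nu; exact: projT2 (cid _).
have [mu mu0 mu_le] := posdef_quadform_lbound (posdef_mxdiag Q_posdef).
have alpha0 : 0 < mu / 2 by rewrite divr_gt0.
pose beta := \sum_j `|potential_grad 0 0 j|.
have bound x : mu / 2 * `|x| ^+ 2 - beta * `|x| + potential 0 <= potential x.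
  have := potential_strongly_convex x 0; rewrite !subr0.
  have := norm_rowmx_mul_le (potential_grad 0) x; rewrite ler_norml => /andP[+ _].
  by have := mu_le x; rewrite /Qblock /beta; lra.
have [_ [xs [Xxs ->]] xs_min] := coercive_min X_closed X0 continuous_potential alpha0 bound.
by exists xs.
Qed.

Lemma potential_quotientE (x w : 'cV[R]_n) t : t != 0 ->
  (potential (x + t *: w) - potential x) / t =
  (x^T *m Qblock *m w) 0 0 + ((stack c)^T *m w) 0 0 +
  t * (2^-1 * (w^T *m Qblock *m w) 0 0) +
  2^-1 * \sum_i a i 0 * ((Lplus *m w) i 0 +
    (phi ((Lminus *m x) i 0 + t * (Lminus *m w) i 0) - phi ((Lminus *m x) i 0)) / t).
Proof.
move=> t0; rewrite potential_shift.
set S := \sum_i _ * (_ + (_ - _) / t).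
have -> : \sum_i a i 0 * ((Lplus *m (t *: w)) i 0 +
    (phi ((Lminus *m x) i 0 + (Lminus *m (t *: w)) i 0) - phi ((Lminus *m x) i 0))) = t * S.
  rewrite /S mulr_sumr; apply: eq_bigr => i _; rewrite -!scalemxAr !mxentryZ.
  by field.
by rewrite quadformZ -!scalemxAr !mxentryZ; field.
Qed.

Lemma cvg_potential_quotient (x w : 'cV[R]_n) :
  (potential (x + t *: w) - potential x) / t @[t --> 0^'+] -->
  (potential_grad x *m w) 0 0.
Proof.
rewrite potential_gradE.
set A := (x^T *m Qblock *m w) 0 0 + ((stack c)^T *m w) 0 0.
set k := 2^-1 * (w^T *m Qblock *m w) 0 0.
have k_cvg : t * k @[t --> 0^'+] --> 0.
  rewrite -[X in _ --> X](mul0r k); apply: (cvgM (g := fun=> k)).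
    exact: cvg_at_right_filter cvg_id.
  exact: cvg_cst.
have sum_cvg : \sum_i a i 0 * ((Lplus *m w) i 0 +
      (phi ((Lminus *m x) i 0 + t * (Lminus *m w) i 0) - phi ((Lminus *m x) i 0)) / t)
    @[t --> 0^'+] --> \sum_i a i 0 * ((Lplus *m w) i 0 +
      derive1 phi ((Lminus *m x) i 0) * (Lminus *m w) i 0).
  apply: (cvg_big add_continuous) => i _.
  apply: (cvgM (f := fun=> a i 0)); first exact: cvg_cst.
  apply: (cvgD (f := fun=> (Lplus *m w) i 0)); first exact: cvg_cst.
  exact: cvg_right_diff_quotient.
rewrite -[A in _ --> A + _]addr0.
apply: cvg_trans (cvgD (cvgD (cvg_cst A) k_cvg) (cvgM (cvg_cst (2^-1 : R)) sum_cvg)).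
apply: near_eq_cvg; near=> t.
have t0 : t != 0 by apply/lt0r_neq0; near: t; exact: nbhs_right_gt.
by rewrite /= potential_quotientE.
Unshelve. all: by end_near. Qed.

Lemma nash_directional {xs : profile} {nu} {y : 'cV[R]_(nn nu)} : nash xs -> X nu y ->
  0 <= (potential_grad (stack xs) *m (stack (update xs nu y) - stack xs)) 0 0.
Proof.
move=> [Xxs xs_nash] Xy; apply: (cvgr_to_ge (cvg_potential_quotient _ _)); near=> t.
have t0 : 0 < t by near: t; exact: nbhs_right_gt.
have t1 : t <= 1 by near: t; exact: nbhs_right_le.
rewrite stack_update_segment divr_ge0 ?(ltW t0) // -theta_update_diff subr_ge0.
apply: xs_nash.
have -> : xs nu + t *: (y - xs nu) = t *: y + (1 - t) *: xs nu.
  by rewrite scalerBr scalerBl scale1r addrCA.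
by apply: convex_factor; rewrite ?(ltW t0).
Unshelve. all: by end_near. Qed.

Lemma nash_variational {xs ys : profile} : nash xs -> (forall nu, X nu (ys nu)) ->
  0 <= (potential_grad (stack xs) *m (stack ys - stack xs)) 0 0.
Proof.
move=> xs_nash Xys; rewrite -stack_sum_updates mulmx_sumr summxE sumr_ge0 // => nu _.
exact: nash_directional.
Qed.

Lemma nash_unique {xs ys : profile} : nash xs -> nash ys -> forall nu, ys nu = xs nu.
Proof.
move=> xs_nash ys_nash nu.
have := nash_variational xs_nash ys_nash.1; have := nash_variational ys_nash xs_nash.1.
have := potential_strongly_convex (stack xs) (stack ys).
have := potential_strongly_convex (stack ys) (stack xs).
rewrite -(opprB (stack ys)); set d := stack ys - stack xs.
have -> : ((- d)^T *m Qblock *m (- d)) 0 0 = (d^T *m Qblock *m d) 0 0.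
  by rewrite !linearN /= !mulNmx opprK.
move=> convex_ys convex_xs vi_ys vi_xs.
have d_le0 : (d^T *m Qblock *m d) 0 0 <= 0 by lra.
have /eqP : d = 0.
  apply/eqP; apply: contraTT d_le0 => d0; rewrite -ltNge.
  exact: posdef_mxdiag Q_posdef _ d0.
by rewrite subr_eq0 => /eqP /(congr1 (fun M => submxcol M nu)); rewrite /stack !mxcolK.
Qed.

End PotentialGame.

Theorem mainTheorem6 (R : realType) (N m : nat) (nn : 'I_N -> nat)
  (Q : forall nu, 'M[R]_(nn nu)) (c : forall nu, 'cV[R]_(nn nu))
  (X : forall nu, set 'cV[R]_(nn nu))
  (a : 'cV[R]_m) (Qy : 'M[R]_m) (B L : 'M[R]_(\sum_(nu < N) nn nu, m))
  (eps : R) (phi : R -> R) :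
  (0 < N)%N -> (0 < m)%N ->
  (forall nu, sym_mx (Q nu) /\ posdef_mx (Q nu)) ->
  (forall nu, X nu !=set0) ->
  convex_set_mx (prod_set X) -> closed (prod_set X) ->
  (forall i, 0 <= a i 0) ->
  is_diag_mx Qy -> posdef_mx Qy ->
  0 < eps -> convex_fun phi -> smooth_fun phi ->
  exists xs : forall nu, 'cV[R]_(nn nu),
    nash_eq Q c X a Qy B L phi xs /\
    forall ys : forall nu, 'cV[R]_(nn nu),
      nash_eq Q c X a Qy B L phi ys -> forall nu, ys nu = xs nu.
Proof.
move=> _ _ Q_spd X_ne X_convex X_closed a_ge0 _ _ _ phi_convex phi_smooth.
have Q_sym nu := (Q_spd nu).1; have Q_posdef nu := (Q_spd nu).2.
have phi_derivable x : derivable phi x 1 by have := phi_smooth 0%N x; rewrite derive1n0.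
have [xs Xxs xs_min] := exists_potential_min (c := c) (Qy := Qy) (B := B) (L := L)
  Q_sym Q_posdef a_ge0 phi_convex phi_derivable X_closed X_ne.
have xs_nash := nash_of_potential_min Xxs xs_min.
exists xs; split => // ys ys_nash.
exact: (nash_unique Q_sym Q_posdef a_ge0 phi_convex phi_derivable X_convex xs_nash ys_nash).
Qed.
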